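(* Let $\mathcal{P}$ be a distribution on a sample space $\mathcal{S}$, $\Theta\subseteq\mathbb{R}^p$, $l$ a loss, $\mathcal{D}$ a distribution on $[0,1)$, $l_{\rm aug}(s,\theta)=\mathbb{E}_{\lambda\sim\mathcal{D}}[l(s_\lambda,\theta)]$, and $\theta_*=\arg\min_\theta\mathbb{E}_{s\sim\mathcal{P}}[l(s,\theta)]$. Assume the Disjointness assumption, and that for every $\epsilon>0$ there is $l'\in L^2(\mathcal{P})$ with $|l(s,\theta_1)-l(s,\theta_2)|\le l'(s)\|\theta_1-\theta_2\|$ for a.e. $s$ and all $\theta_1,\theta_2$ in the $\epsilon$-ball around $\theta_*$. Then for every $\epsilon>0$ there is $l'_{\rm aug}\in L^2(\mathcal{P})$ such that for a.e. $s$ and all $\theta_1,\theta_2$ in the $\epsilon$-ball around $\theta_*$, $|l_{\rm aug}(s,\theta_1)-l_{\rm aug}(s,\theta_2)|\le l'_{\rm aug}(s)\|\theta_1-\theta_2\|$.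
   Context: Samples $s=(x_0,\dots,x_d,y)$; RIM augmentation with $\lambda=(\lambda_1,\dots,\lambda_d)$, components i.i.d. from $\mathcal{D}$: $x_{0,\lambda_0}=x_0$, $x_{j,\lambda_j}=(1-\lambda_j)x_j+\lambda_jx_{j-1,\lambda_{j-1}}$, $s_\lambda=(x_{0,\lambda_0},\dots,x_{d,\lambda_d},y)$. Disjointness assumption: $\mathcal{S}$ is the disjoint countable union of measurable sets $S_1,S_2,\dots$, each the set of all possible augmentations of a sample, and for $s\in S_j$ and integrable $h$, $\mathbb{E}_{\lambda\sim\mathcal{D}}[h(s_\lambda)]=\mathbb{E}_{s'\sim\mathcal{P}}[h(s')\mid s'\in S_j]$. *)

From HB Require Import structures.
From mathcomp Require Import all_boot all_order all_algebra.
From mathcomp Require Import all_classical all_reals all_analysis.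
Set Implicit Arguments. Unset Strict Implicit. Unset Printing Implicit Defensive.
Import Order.TTheory GRing.Theory Num.Theory.
Import numFieldNormedType.Exports.
Local Open Scope classical_set_scope.
Local Open Scope ring_scope.

Definition enorm {R : realType} {p : nat} (v : 'rV[R]_p) : R :=
  Num.sqrt (\sum_(i < p) v 0 i ^+ 2).

Fixpoint rim {R : realType} {V : lmodType R} (x : nat -> V) (lam : nat -> R)
  (j : nat) : V :=
  match j with
  | 0 => x 0
  | j'.+1 => (1 - lam j'.+1) *: x j'.+1 + lam j'.+1 *: rim x lam j'
  end.

(* The RIM augmentation s_lambda of a sample s = (x_0,...,x_d,y), where the
   sample space S is identified with ('I_d.+1 -> V) * Y through
   [xf], [yf] (coordinates) and [mk] (constructor), and
   lambda = (lambda_1,...,lambda_d) is the tuple t (lambda_k = tnth t (k-1)). *)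
Definition rim_aug {R : realType} {V : lmodType R} {Y S : Type} {d : nat}
  (xf : S -> 'I_d.+1 -> V) (yf : S -> Y) (mk : ('I_d.+1 -> V) -> Y -> S)
  (s : S) (t : d.-tuple R) : S :=
  mk (fun j : 'I_d.+1 =>
        rim (fun k => xf s (inord k)) (fun k => nth 0 t k.-1) j)
     (yf s).

(* PL is the law of lambda = (lambda_1,...,lambda_d) with components i.i.d.
   with law D, i.e. PL is the d-fold product measure D^{\otimes d}
   (characterized on measurable rectangles). *)
Definition iid_law {R : realType} (d : nat) (D : probability R R)
  (PL : probability (d.-tuple R) R) : Prop :=
  forall A : 'I_d -> set R, (forall i, measurable (A i)) ->
    PL [set t | forall i, A i (tnth t i)] = (\prod_(i < d) D (A i))%E.

Definition L2 {R : realType} {dS} {S : measurableType dS}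
  (P : probability S R) (f : S -> R) : Prop :=
  measurable_fun setT f /\ (\int[P]_s ((f s) ^+ 2)%:E < +oo)%E.

Definition l_aug {R : realType} {d p : nat} {S : Type}
  (PL : probability (d.-tuple R) R) (aug : S -> d.-tuple R -> S)
  (l : S -> 'rV[R]_p -> R) (s : S) (th : 'rV[R]_p) : \bar R :=
  (\int[PL]_t (l (aug s t) th)%:E)%E.

From HB Require Import structures.
From mathcomp Require Import all_boot all_order all_algebra.
From mathcomp Require Import all_classical all_reals all_analysis.
From mathcomp Require Import measurable_realfun lra.
Import Order.TTheory GRing.Theory Num.Theory.
Import numFieldNormedType.Exports.
Local Open Scope classical_set_scope.
Local Open Scope ring_scope.

(* For s in a block S_k of positive measure (almost every s is in one), the
   disjointness assumption makes l_aug(s, .) the P-mean of l(., .) over S_k.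
   Averaging the Lipschitz bound for l over S_k thus makes the P-mean of |l'|
   over the block of s a Lipschitz constant for l_aug(s, .).  This block mean
   is still in L^2(P), because on each block Cauchy-Schwarz gives
   P(S_k) * (mean of |l'| over S_k)^2 <= int_{S_k} l'^2. *)

Section square_integrable.
Context {R : realType} {d : measure_display} {T : measurableType d}.
Variable P : probability T R.

Lemma L2_normr {f : T -> R} : L2 P f -> L2 P (fun x => `|f x|).
Proof.
move=> [mf f2]; split; first exact: measurableT_comp.
rewrite (eq_integral (fun x => (f x ^+ 2)%:E)) // => x _.
by rewrite real_normK ?num_real.
Qed.

Lemma L2_integrable {f : T -> R} : L2 P f -> P.-integrable setT (EFin \o f).
Proof.
move=> [mf f2]; apply/integrableP; split; first exact/measurable_EFinP.
have mf2 : measurable_fun setT (fun x => (f x ^+ 2)%:E).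
  by apply/measurable_EFinP; exact: measurable_funX.
apply: (@le_lt_trans _ _ (\int[P]_x (1 + (f x ^+ 2)%:E))%E).
  apply: ge0_le_integral => //=.
  - by apply/measurable_EFinP; exact: measurableT_comp.
  - exact: emeasurable_funD.
  - move=> x _; rewrite -EFinD lee_fin -(real_normK (num_real (f x))).
    by have := normr_ge0 (f x); nra.
rewrite ge0_integralD //; last by move=> x _; rewrite lee_fin sqr_ge0.
by rewrite integral_cst // mul1e lte_add_pinfty // ltey_eq fin_num_measure.
Qed.

End square_integrable.

(* The mean of [g] on [B]; it is [0] when [mu B] is [0] or infinite. *)
Definition cond_mean {R : realType} {d : measure_display} {T : measurableType d}
    (mu : {measure set T -> \bar R}) (B : set T) (g : T -> R) : R :=
  fine (\int[mu]_(x in B) (g x)%:E) / fine (mu B).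

Section cond_mean.
Context {R : realType} {d : measure_display} {T : measurableType d}.
Variables (mu : {measure set T -> \bar R}) (B : set T).
Hypotheses (mB : measurable B) (muB : mu B \is a fin_num).

Let muBE : mu B = (fine (mu B))%:E.
Proof. by rewrite fineK. Qed.

Lemma cond_meanE (f : T -> R) : mu.-integrable B (EFin \o f) ->
  (((fine (mu B))^-1)%:E * \int[mu]_(x in B) (f x)%:E)%E = (cond_mean mu B f)%:E.
Proof.
by move=> /(integrable_fin_num mB)/fineK <-; rewrite /cond_mean mulrC EFinM.
Qed.

Lemma cond_mean_ge0 (g : T -> R) : (forall x, 0 <= g x) -> 0 <= cond_mean mu B g.
Proof.
move=> g0; rewrite divr_ge0 ?fine_ge0 ?measure_ge0 //.
by apply: integral_ge0 => x _; rewrite lee_fin.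
Qed.

Lemma cond_meanZr (g : T -> R) (k : R) : mu.-integrable B (EFin \o g) ->
  cond_mean mu B (fun x => g x * k) = cond_mean mu B g * k.
Proof.
move=> ig; rewrite /cond_mean mulrAC; congr (_ / _).
under eq_integral do rewrite EFinM.
by rewrite integralZr // fineM // integrable_fin_num.
Qed.

Lemma le_abse_integralB (f1 f2 g : T -> R) :
  mu.-integrable B (EFin \o f1) -> mu.-integrable B (EFin \o f2) ->
  measurable_fun B g -> (forall x, 0 <= g x) ->
  {ae mu, forall x, B x -> `|f1 x - f2 x| <= g x} ->
  (`|\int[mu]_(x in B) (f1 x)%:E - \int[mu]_(x in B) (f2 x)%:E|
    <= \int[mu]_(x in B) (g x)%:E)%E.
Proof.
move=> if1 if2 mg g0 f12g.
have mf12 : measurable_fun B (fun x => ((f1 x)%:E - (f2 x)%:E)%E).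
  by apply: emeasurable_funB; [exact: measurable_int if1|
                               exact: measurable_int if2].
rewrite -integralB_EFin //; apply: le_trans (le_abse_integral _ mB mf12) _.
apply: ae_ge0_le_integral => //.
- exact: measurableT_comp.
- by move=> x _; rewrite lee_fin.
- exact/measurable_EFinP.
Qed.

Lemma le_abs_cond_meanB (f1 f2 g : T -> R) :
  mu.-integrable B (EFin \o f1) -> mu.-integrable B (EFin \o f2) ->
  mu.-integrable B (EFin \o g) -> (forall x, 0 <= g x) ->
  {ae mu, forall x, B x -> `|f1 x - f2 x| <= g x} ->
  `|cond_mean mu B f1 - cond_mean mu B f2| <= cond_mean mu B g.
Proof.
move=> if1 if2 ig g0 f12g.
have mg : measurable_fun B g by apply/measurable_EFinP; exact: measurable_int ig.
have := le_abse_integralB _ _ _ if1 if2 mg g0 f12g.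
rewrite -[X in (`|X - _| <= _)%E]fineK ?integrable_fin_num //.
rewrite -[X in (`|_ - X| <= _)%E]fineK ?integrable_fin_num //.
rewrite -[X in (_ <= X)%E]fineK ?integrable_fin_num //.
rewrite -EFinB /= lee_fin => le_int.
rewrite /cond_mean -mulrBl normrM [`|_^-1|]ger0_norm; last first.
  by rewrite invr_ge0 fine_ge0 // measure_ge0.
by apply: ler_wpM2r => //; rewrite invr_ge0 fine_ge0 // measure_ge0.
Qed.

Lemma cond_mean_sqr_le (g : T -> R) : (forall x, 0 <= g x) ->
  mu.-integrable B (EFin \o g) ->
  ((cond_mean mu B g ^+ 2)%:E * mu B <= \int[mu]_(x in B) (g x ^+ 2)%:E)%E.
Proof.
move=> g0 ig.
have mg : measurable_fun B g.
  by apply/measurable_EFinP; exact: measurable_int ig.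
have a0 : 0 <= cond_mean mu B g by exact: cond_mean_ge0.
have Q0 : (0 <= \int[mu]_(x in B) (g x ^+ 2)%:E)%E.
  by apply: integral_ge0 => x _; rewrite lee_fin sqr_ge0.
(* Integrate [2 a g <= a^2 + g^2] for the mean [a] of [g] on [B], then use
   [int_B g = a * mu B]. *)
have amgm : (\int[mu]_(x in B) ((2 * cond_mean mu B g)%:E * (g x)%:E)
    <= \int[mu]_(x in B) (cst (cond_mean mu B g ^+ 2)%:E x + (g x ^+ 2)%:E))%E.
  apply: ge0_le_integral => //.
  - by move=> x _; rewrite -EFinM lee_fin mulr_ge0 // mulr_ge0.
  - by apply: measurable_funeM; exact/measurable_EFinP.
  - apply: emeasurable_funD => //.
    by apply/measurable_EFinP; exact: measurable_funX.
  - move=> x _; rewrite -EFinM -EFinD lee_fin.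
    by have := sqr_ge0 (cond_mean mu B g - g x); nra.
move: amgm.
rewrite ge0_integralZl_EFin ?ge0_integralD ?integral_cst //; first last.
- by apply: mulr_ge0.
- exact/measurable_EFinP.
- by move=> x _; rewrite lee_fin.
- by apply/measurable_EFinP; exact: measurable_funX.
- by move=> x _; rewrite lee_fin sqr_ge0.
- by move=> x _; rewrite lee_fin sqr_ge0.
rewrite -[X in (_ * X <= _)%E -> _]fineK ?integrable_fin_num //.
rewrite /cond_mean muBE /=.
set p := fine (mu B); set a := fine _ / p.
have [->|p_neq0] := eqVneq p 0; first by rewrite mule0.
have -> : fine (\int[mu]_(x in B) (g x)%:E) = a * p by rewrite divfK.
move: Q0; case: (\int[mu]_(x in B) (g x ^+ 2)%:E)%E => [q| |] //= _.
  by rewrite -!EFinM -EFinD !lee_fin; nra.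
by move=> _; rewrite leey.
Qed.

End cond_mean.

Section countable_partition.
Context {R : realType} {d : measure_display} {T : measurableType d}.
Variables (J : set nat) (A : nat -> set T).
Hypothesis mA : forall k, J k -> measurable (A k).
Hypothesis disjA : forall k k', J k -> J k' -> k <> k' -> A k `&` A k' = set0.
Hypothesis covA : \bigcup_(k in J) A k = setT.

Definition block (s : T) : nat := xget 0%N [set k | J k /\ A k s].

Lemma block_spec s : J (block s) /\ A (block s) s.
Proof.
apply: (@xgetPex _ 0%N [set k | J k /\ A k s]).
have : (\bigcup_(k in J) A k) s by rewrite covA.
by case=> k Jk Aks; exists k.
Qed.

Lemma block_eq {s k} : J k -> A k s -> block s = k.
Proof.
move=> Jk Aks; have [Jb Abs] := block_spec s.
apply: contrapT => /(disjA _ _ Jb Jk) disj.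
by have : (A (block s) `&` A k) s by []; rewrite disj.
Qed.

Let A0 k := if `[< J k >] then A k else set0.

Let measurable_A0 k : measurable (A0 k).
Proof. by rewrite /A0; case: asboolP => // /mA. Qed.

Let trivIset_A0 : trivIset setT A0.
Proof.
move=> i j _ _ [x []]; rewrite /A0.
case: asboolP => // Ji Aix; case: asboolP => // Jj Ajx.
by rewrite -(block_eq Ji Aix) -(block_eq Jj Ajx).
Qed.

Let bigcup_A0 : \bigcup_k A0 k = setT.
Proof.
apply/seteqP; split => // s _; have [Jb Abs] := block_spec s.
by exists (block s) => //; rewrite /A0 asboolT.
Qed.

Lemma measurable_fun_block {d' : measure_display} {U : measurableType d'}
  (c : nat -> U) : measurable_fun setT (c \o block).
Proof.
move=> _ B mB; rewrite setTI.
have -> : (c \o block) @^-1` B = \bigcup_k (A0 k `&` [set _ | B (c k)]).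
  apply/seteqP; split => s /=.
  - have [Jb Abs] := block_spec s.
    by exists (block s) => //; split => //; rewrite /A0 asboolT.
  - case=> k _ []; rewrite /A0; case: asboolP => // Jk Aks Bk.
    by rewrite /preimage /= (block_eq Jk Aks).
apply: bigcupT_measurable => k; apply: measurableI => //.
by have [Bk|Bk] := pselect (B (c k)); [rewrite (_ : [set _ | _] = setT)|
  rewrite (_ : [set _ | _] = set0)] => //; apply/seteqP; split.
Qed.

Lemma ge0_le_integral_blocks (mu : {measure set T -> \bar R})
    (f h : T -> \bar R) :
  measurable_fun setT f -> measurable_fun setT h ->
  (forall x, 0 <= f x)%E -> (forall x, 0 <= h x)%E ->
  (forall k, J k -> \int[mu]_(x in A k) f x <= \int[mu]_(x in A k) h x)%E ->
  (\int[mu]_x f x <= \int[mu]_x h x)%E.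
Proof.
move=> mf mh f0 h0 fh; rewrite -bigcup_A0.
rewrite !ge0_integral_bigcup ?bigcup_A0 //.
apply: lee_nneseries => k _; first by move=> _; exact: integral_ge0.
by rewrite /A0; case: asboolP => Jk /=; [exact: fh|rewrite !integral_set0].
Qed.

Lemma ae_measure_block_gt0 (mu : {measure set T -> \bar R}) :
  {ae mu, forall s, (0 < mu (A (block s)))%E}.
Proof.
pose N k := if `[< J k /\ mu (A k) = 0 >] then A k else set0.
apply: (negligibleS _ (negligible_bigcup (F := N) _)).
- move=> s /= /negP; rewrite -leNgt => mu0.
  have [Jb Abs] := block_spec s.
  exists (block s) => //; rewrite /N asboolT //; split => //.
  by apply/eqP; rewrite eq_le mu0 measure_ge0.
- move=> k; rewrite /N; case: asboolP => [[Jk mu0]|_].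
    by exists (A k); split => //; exact: mA.
  exact: negligible_set0.
Qed.

Lemma L2_cond_mean_block (P : probability T R) (g : T -> R) :
  (forall x, 0 <= g x) -> L2 P g -> L2 P (fun s => cond_mean P (A (block s)) g).
Proof.
move=> g0 g2; have ig := L2_integrable P g2; have [mg g2fin] := g2.
split; first exact: (measurable_fun_block (fun k => cond_mean P (A k) g)).
apply: le_lt_trans g2fin; apply: ge0_le_integral_blocks.
- apply/measurable_EFinP; apply: measurable_funX.
  exact: (measurable_fun_block (fun k => cond_mean P (A k) g)).
- by apply/measurable_EFinP; exact: measurable_funX.
- by move=> x; rewrite lee_fin sqr_ge0.
- by move=> x; rewrite lee_fin sqr_ge0.
move=> k Jk; have mAk := mA _ Jk.
rewrite (eq_integral (cst (cond_mean P (A k) g ^+ 2)%:E)); last first.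
  by move=> x; rewrite inE => Akx; rewrite (block_eq Jk Akx).
rewrite integral_cst //; apply: cond_mean_sqr_le => //.
- exact: fin_num_measure.
- exact: integrableS ig.
Qed.

End countable_partition.

Arguments block_spec {d T J A}.
Arguments ae_measure_block_gt0 {R d T J A}.

Theorem proposition1
  (R : realType) (dS : measure_display) (S : measurableType dS)
  (P : probability S R)
  (V : lmodType R) (Y : Type) (d p : nat)
  (xf : S -> 'I_d.+1 -> V) (yf : S -> Y) (mk : ('I_d.+1 -> V) -> Y -> S)
  (Hmk : forall s, mk (xf s) (yf s) = s)
  (Hxf : forall f y, xf (mk f y) = f)
  (Hyf : forall f y, yf (mk f y) = y)
  (D : probability R R) (HD : D [set x : R | 0 <= x < 1] = 1%E)
  (PL : probability (d.-tuple R) R) (HPL : iid_law D PL)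
  (Theta : set 'rV[R]_p) (l : S -> 'rV[R]_p -> R) (theta_star : 'rV[R]_p)
  (Hl_int : forall th, Theta th -> P.-integrable setT (fun s => (l s th)%:E))
  (Hstar : Theta theta_star /\
     forall th, Theta th ->
       (\int[P]_s (l s theta_star)%:E <= \int[P]_s (l s th)%:E)%E)
  (J : set nat) (Sj : nat -> set S)
  (HSm : forall k, J k -> measurable (Sj k))
  (HSdisj : forall k k', J k -> J k' -> k <> k' -> Sj k `&` Sj k' = set0)
  (HScover : \bigcup_(k in J) Sj k = setT)
  (HSaug : forall k, J k -> exists s0 : S,
      Sj k = [set rim_aug xf yf mk s0 t |
               t in [set t : d.-tuple R | forall i, 0 <= tnth t i < 1]])
  (HScond : forall k, J k -> (0 < P (Sj k))%E ->
      forall s, Sj k s ->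
      forall h : S -> R, P.-integrable setT (EFin \o h) ->
        (\int[PL]_t (h (rim_aug xf yf mk s t))%:E
         = ((fine (P (Sj k)))^-1)%:E * \int[P]_(x in Sj k) (h x)%:E)%E)
  (HLip : forall eps : R, 0 < eps -> exists l' : S -> R, L2 P l' /\
      {ae P, forall s, forall th1 th2, Theta th1 -> Theta th2 ->
         enorm (th1 - theta_star) < eps -> enorm (th2 - theta_star) < eps ->
         `|l s th1 - l s th2| <= l' s * enorm (th1 - th2)}) :
  forall eps : R, 0 < eps -> exists l'aug : S -> R, L2 P l'aug /\
      {ae P, forall s, forall th1 th2, Theta th1 -> Theta th2 ->
         enorm (th1 - theta_star) < eps -> enorm (th2 - theta_star) < eps ->
         (`| l_aug PL (rim_aug xf yf mk) l s th1
             - l_aug PL (rim_aug xf yf mk) l s th2 |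
          <= (l'aug s * enorm (th1 - th2))%:E)%E}.
Proof.
move=> eps eps0; have [l' [l'2 l'_lip]] := HLip eps eps0.
exists (fun s => cond_mean P (Sj (block J Sj s)) (fun x => `|l' x|)); split.
  by apply: L2_cond_mean_block => //; exact: L2_normr.
apply: filterS (ae_measure_block_gt0 HSm HScover P).
move=> s Ps th1 th2 T1 T2 n1 n2.
have [Jb Sbs] := block_spec HScover s; set b := block J Sj s in Jb Sbs Ps *.
have mSb := HSm _ Jb.
have integrable_Sb (f : S -> R) : P.-integrable setT (EFin \o f) ->
    P.-integrable (Sj b) (EFin \o f).
  exact: integrableS.
have ig := integrable_Sb _ (L2_integrable P (L2_normr P l'2)).
rewrite /l_aug (HScond _ Jb Ps _ Sbs (fun x => l x th1) (Hl_int _ T1)).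
rewrite (HScond _ Jb Ps _ Sbs (fun x => l x th2) (Hl_int _ T2)).
rewrite !cond_meanE ?integrable_Sb ?Hl_int // -EFinB lee_fin.
rewrite -cond_meanZr //; apply: le_abs_cond_meanB => //.
- exact: integrable_Sb (Hl_int _ T1).
- exact: integrable_Sb (Hl_int _ T2).
- apply: eq_integrable mSb _ _ _ (integrableZr mSb (enorm (th1 - th2)) ig) => x _.
  by rewrite /= EFinM.
- by move=> x; rewrite mulr_ge0 // /enorm sqrtr_ge0.
apply: filterS l'_lip => x lip _.
apply: le_trans (lip _ _ T1 T2 n1 n2) _.
by rewrite ler_wpM2r ?ler_norm // /enorm sqrtr_ge0.
Qed.
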